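(* Let $X$ be an $m\times m$ Hermitian positive definite matrix and $n\ge1$ an integer. Then the function $f_{X,n}(Y):=\operatorname{tr}\{(XY^{-1})^n\}$ is strictly convex on the set of $m\times m$ Hermitian positive definite matrices $Y$. *)

From HB Require Import structures.
From mathcomp Require Import all_boot all_order all_algebra.
From mathcomp Require Import all_reals.
From mathcomp.real_closed Require Import complex.
Set Implicit Arguments. Unset Strict Implicit. Unset Printing Implicit Defensive.
Import Order.TTheory GRing.Theory Num.Theory.
Local Open Scope ring_scope.

Definition ctrmx (C : numClosedFieldType) (m n : nat) (A : 'M[C]_(m, n)) : 'M[C]_(n, m) :=
  (map_mx Num.conj A)^T.

Definition hermitian (C : numClosedFieldType) (m : nat) (A : 'M[C]_m) : Prop :=
  ctrmx A = A.

Definition posdef (C : numClosedFieldType) (m : nat) (A : 'M[C]_m) : Prop :=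
  forall v : 'cV[C]_m, v != 0 -> 0 < (ctrmx v *m A *m v) 0 0.

Definition hpd (C : numClosedFieldType) (m : nat) (A : 'M[C]_m) : Prop :=
  hermitian A /\ posdef A.

Definition fXn (C : numClosedFieldType) (m : nat) (X : 'M[C]_m) (n : nat) (Y : 'M[C]_m) : C :=
  \tr ((X *m invmx Y) ^+ n).

(* Write g(A) := tr(A^-n).  With X = T T^H and S := T^-1, cyclicity of the
   trace gives f_{X,n}(Y) = g(S Y S^H), and Y |-> S Y S^H is an injective linear
   map preserving positive definiteness, so it suffices that g is strictly
   convex.  For A = U^H diag(a) U and B = V^H diag(b) V the Bregman gap
   g(A) - g(B) - <g'(B), A - B> equals sum_(i,j) |(U V^H)_ij|^2 h(a_i, b_j), where
   h is the scalar Bregman gap of x |-> x^-n; h(a, b) is a positive multiple of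
   x^(n+1) - (n+1) x + n at x = b/a, which is >= 0 with equality only at x = 1.
   Hence the gap is >= 0 and vanishes only when diag(a) U V^H = U V^H diag(b),
   i.e. A = B.  Averaging the gaps of A1, A2 at their convex combination M
   cancels the linear terms and leaves c1 g(A1) + c2 g(A2) - g(M) > 0. *)

From Pilot Require Import Defs.
From mathcomp Require Import all_boot all_order all_algebra.
From mathcomp Require Import all_reals.
From mathcomp.real_closed Require Import complex.
From mathcomp Require Import sesquilinear spectral ring.
Set Implicit Arguments. Unset Strict Implicit. Unset Printing Implicit Defensive.
Import Order.TTheory GRing.Theory Num.Theory.
Local Open Scope ring_scope.

Section TangentGap.
Variable F : numFieldType.
Implicit Types (a b x : F).

Definition tangent_gap k x := x ^+ k.+1 - k.+1%:R * x + k%:R.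

Lemma tangent_gapS k x :
  tangent_gap k.+1 x = x * tangent_gap k x + k.+1%:R * (x - 1) ^+ 2.
Proof. by rewrite /tangent_gap exprS; ring. Qed.

Lemma tangent_gap_ge0 k x : 0 <= x -> 0 <= tangent_gap k x.
Proof.
move=> x_ge0; elim: k => [|k IHk]; first by rewrite /tangent_gap expr1 mul1r subrr add0r.
have x1_real : x - 1 \is Num.real by rewrite realB ?ger0_real.
by rewrite tangent_gapS addr_ge0 ?(mulr_ge0 x_ge0) // mulr_ge0 // real_exprn_even_ge0.
Qed.

Lemma tangent_gap_gt0 k x : 0 <= x -> x != 1 -> 0 < tangent_gap k.+1 x.
Proof.
move=> x_ge0 x_neq1; rewrite tangent_gapS ltr_wpDl ?mulr_ge0 ?tangent_gap_ge0 //.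
have x1_real : x - 1 \is Num.real by rewrite realB ?ger0_real.
apply: mulr_gt0; first exact: ltr0Sn.
by rewrite real_exprn_even_gt0 // subr_eq0.
Qed.

Definition invpow_bregman n a b :=
  a^-1 ^+ n - b^-1 ^+ n + n%:R * (b^-1 ^+ n.+1 * a - b^-1 ^+ n).

Lemma invpow_bregmanE n a b : 0 < a -> 0 < b ->
  invpow_bregman n a b = a * b^-1 ^+ n.+1 * tangent_gap n (b / a).
Proof.
move=> a_gt0 b_gt0; have a_neq0 := lt0r_neq0 a_gt0; have b_neq0 := lt0r_neq0 b_gt0.
rewrite /invpow_bregman /tangent_gap !exprVn exprMn exprVn !exprS.
have an_neq0 : a ^+ n != 0 by rewrite expf_neq0.
have bn_neq0 : b ^+ n != 0 by rewrite expf_neq0.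
by field; rewrite a_neq0 b_neq0 an_neq0 bn_neq0.
Qed.

Lemma invpow_bregman_ge0 n a b : 0 < a -> 0 < b -> 0 <= invpow_bregman n a b.
Proof.
move=> a_gt0 b_gt0; rewrite invpow_bregmanE // mulr_ge0 ?tangent_gap_ge0 ?divr_ge0 ?ltW //.
by rewrite mulr_gt0 ?exprn_gt0 ?invr_gt0.
Qed.

Lemma invpow_bregman_eq0 n a b : (0 < n)%N -> 0 < a -> 0 < b ->
  invpow_bregman n a b = 0 -> a = b.
Proof.
case: n => // n _ a_gt0 b_gt0; rewrite invpow_bregmanE //.
have [/divr1_eq -> //|ba_neq1] := eqVneq (b / a) 1.
move/eqP; rewrite gt_eqF // mulr_gt0 ?tangent_gap_gt0 ?divr_ge0 ?ltW //.
by rewrite mulr_gt0 ?exprn_gt0 ?invr_gt0.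
Qed.

End TangentGap.

Section MatrixAlgebra.
Variables (R : comUnitRingType) (n : nat).
Implicit Types (A B P Q : 'M[R]_n) (d : 'rV[R]_n).

Lemma mulmx1_invmx A B : A *m B = 1%:M -> invmx A = B.
Proof.
move=> AB; have [A_unit _] := mulmx1_unit AB.
by rewrite -[B]mul1mx -(mulVmx A_unit) -mulmxA AB mulmx1.
Qed.

Lemma invmx_mul A B : A \in unitmx -> B \in unitmx ->
  invmx (A *m B) = invmx B *m invmx A.
Proof.
move=> A_unit B_unit; apply: mulmx1_invmx.
by rewrite mulmxA -(mulmxA A) mulmxV // mulmx1 mulmxV.
Qed.

Lemma invmx_conj P Q A : Q *m P = 1%:M -> A \in unitmx ->
  invmx (P *m A *m Q) = P *m invmx A *m Q.
Proof.
move=> QP A_unit; have [Q_unit P_unit] := mulmx1_unit QP.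
rewrite !invmx_mul ?unitmx_mul ?P_unit // (mulmx1_invmx QP).
by rewrite (mulmx1_invmx (mulmx1C QP)) mulmxA.
Qed.

Lemma exprmx_conj P Q A k : Q *m P = 1%:M ->
  (P *m A *m Q) ^+ k = P *m A ^+ k *m Q.
Proof.
move=> QP; elim: k => [|k IHk]; first by rewrite !expr0 -idmxE mulmx1 (mulmx1C QP).
by rewrite !exprS IHk -!mulmxE !mulmxA -(mulmxA _ Q P) QP mulmx1.
Qed.

Lemma mxtrace_conj P Q A : Q *m P = 1%:M -> \tr (P *m A *m Q) = \tr A.
Proof. by move=> QP; rewrite mxtrace_mulC mulmxA QP mul1mx. Qed.

Lemma mxtrace_exprC A B k : \tr ((A *m B) ^+ k) = \tr ((B *m A) ^+ k).
Proof.
case: k => [|k]; first by rewrite !expr0.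
have expr_shift : (A *m B) ^+ k.+1 = A *m (B *m A) ^+ k *m B.
  elim: k => [|k IHk]; first by rewrite expr1 expr0 -idmxE mulmx1.
  by rewrite exprS IHk [(B *m A) ^+ k.+1]exprS -!mulmxE !mulmxA.
by rewrite expr_shift mxtrace_mulC mulmxA exprS.
Qed.

Lemma diag_mx_expr d k : diag_mx d ^+ k = diag_mx (\row_j d 0 j ^+ k).
Proof.
elim: k => [|k IHk]; first by apply/matrixP => i j; rewrite !mxE expr0.
by rewrite exprS IHk -mulmxE mulmx_diag; congr diag_mx; apply/rowP => j; rewrite !mxE exprS.
Qed.

Lemma diag_mx_inv d : (forall i, d 0 i \is a GRing.unit) ->
  diag_mx d *m diag_mx (\row_j (d 0 j)^-1) = 1%:M.
Proof.
move=> d_unit; rewrite mulmx_diag; apply/matrixP => i j.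
by rewrite !mxE mulrV.
Qed.

End MatrixAlgebra.

Section ConjugateTranspose.
Variable C : numClosedFieldType.

Lemma ctrmxE m n (A : 'M[C]_(m, n)) : ctrmx A = (A ^t Num.conj)%sesqui.
Proof. by rewrite /ctrmx map_trmx. Qed.

Lemma ctrmxK m n (A : 'M[C]_(m, n)) : ctrmx (ctrmx A) = A.
Proof. by apply/matrixP => i j; rewrite !mxE conjCK. Qed.

Lemma ctrmx_mul m n p (A : 'M[C]_(m, n)) (B : 'M[C]_(n, p)) :
  ctrmx (A *m B) = ctrmx B *m ctrmx A.
Proof. by rewrite /ctrmx map_mxM trmx_mul. Qed.

Lemma ctrmxD m n (A B : 'M[C]_(m, n)) : ctrmx (A + B) = ctrmx A + ctrmx B.
Proof. by apply/matrixP => i j; rewrite !mxE rmorphD. Qed.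

Lemma ctrmxZ m n a (A : 'M[C]_(m, n)) : ctrmx (a *: A) = a^* *: ctrmx A.
Proof. by apply/matrixP => i j; rewrite !mxE rmorphM. Qed.

Lemma ctrmx_diag n (d : 'rV[C]_n) : ctrmx (diag_mx d) = diag_mx (map_mx Num.conj d).
Proof. by rewrite /ctrmx map_diag_mx tr_diag_mx. Qed.

Lemma ctrmx_inv n (A : 'M[C]_n) : ctrmx (invmx A) = invmx (ctrmx A).
Proof. by rewrite /ctrmx map_invmx trmx_inv. Qed.

Lemma unitmx_ctrmx n (A : 'M[C]_n) : (ctrmx A \in unitmx) = (A \in unitmx).
Proof. by rewrite /ctrmx unitmx_tr map_unitmx. Qed.

Lemma ctrmx_unitary n (U : 'M[C]_n) : (ctrmx U \is unitarymx) = (U \is unitarymx).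
Proof. by rewrite ctrmxE trmxC_unitary. Qed.

Lemma unitarymx_mulmxV n (U : 'M[C]_n) : U \is unitarymx -> U *m ctrmx U = 1%:M.
Proof. by rewrite ctrmxE => /unitarymxP. Qed.

Lemma unitarymx_mulVmx n (U : 'M[C]_n) : U \is unitarymx -> ctrmx U *m U = 1%:M.
Proof. by move=> /unitarymx_mulmxV /mulmx1C. Qed.

Lemma unitarymx_norm_row n (U : 'M[C]_n) i :
  U \is unitarymx -> \sum_j `|U i j| ^+ 2 = 1.
Proof.
move=> /unitarymx_mulmxV /matrixP /(_ i i); rewrite !mxE eqxx mulr1n => <-.
by apply: eq_bigr => j _; rewrite normCK !mxE.
Qed.

Lemma unitarymx_norm_col n (U : 'M[C]_n) j :
  U \is unitarymx -> \sum_i `|U i j| ^+ 2 = 1.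
Proof.
rewrite -ctrmx_unitary => /(unitarymx_norm_row j) <-.
by apply: eq_bigr => i _; rewrite !mxE norm_conjC.
Qed.

End ConjugateTranspose.

Section PositiveDefinite.
Variables (C : numClosedFieldType) (m : nat).
Implicit Types (A B P U : 'M[C]_m) (d : 'rV[C]_m).

Lemma hpd_spectral A : hpd A ->
  exists U d, [/\ U \is unitarymx, forall i, 0 < d 0 i & A = ctrmx U *m diag_mx d *m U].
Proof.
move=> [A_herm A_posdef]; set U := spectralmx A; set d := spectral_diag A.
have U_unitary : U \is unitarymx := spectral_unitarymx A.
have /hermitian_normalmx/orthomx_spectralP : A \is hermsymmx.
  by rewrite qualifE expr0 scale1r -ctrmxE A_herm.
rewrite invmx_unitary // -ctrmxE -/U -/d => A_eq.
exists U, d; split => // i.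
pose v : 'cV[C]_m := ctrmx U *m delta_mx i 0.
have Uv : U *m v = delta_mx i 0 by rewrite mulmxA unitarymx_mulmxV // mul1mx.
have v_neq0 : v != 0.
  apply: contraPneq Uv => ->; rewrite mulmx0 => /matrixP/(_ i 0).
  by rewrite !mxE !eqxx => /eqP; rewrite eq_sym oner_eq0.
have := A_posdef v v_neq0.
have -> : ctrmx v *m A *m v = ctrmx (U *m v) *m diag_mx d *m (U *m v).
  by rewrite {1}A_eq ctrmx_mul !mulmxA.
have -> : ctrmx (U *m v) = delta_mx 0 i :> 'rV_m by rewrite Uv /ctrmx map_delta_mx trmx_delta.
by rewrite Uv -rowE -colE !mxE eqxx mulr1n.
Qed.

Lemma diag_mx_pos_unit d : (forall i, 0 < d 0 i) -> diag_mx d \in unitmx.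
Proof.
move=> d_gt0; have d_unit i : d 0 i \is a GRing.unit by rewrite unitfE lt0r_neq0.
by have [] := mulmx1_unit (diag_mx_inv d_unit).
Qed.

Lemma spectral_unit U d : U \is unitarymx -> (forall i, 0 < d 0 i) ->
  ctrmx U *m diag_mx d *m U \in unitmx.
Proof.
by move=> U_unitary d_gt0; rewrite !unitmx_mul diag_mx_pos_unit ?unitarymx_unit ?ctrmx_unitary.
Qed.

Lemma hpd_unit A : hpd A -> A \in unitmx.
Proof. by move=> /hpd_spectral [U [d [U_unitary d_gt0 ->]]]; apply: spectral_unit. Qed.

Lemma hpd_pos_comb (c1 c2 : C) A B : 0 < c1 -> 0 < c2 -> hpd A -> hpd B ->
  hpd (c1 *: A + c2 *: B).
Proof.
move=> c1_gt0 c2_gt0 [A_herm A_posdef] [B_herm B_posdef]; split.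
  by rewrite /Defs.hermitian ctrmxD !ctrmxZ A_herm B_herm !conj_Creal ?gtr0_real.
move=> v v_neq0; have := addr_gt0 (mulr_gt0 c1_gt0 (A_posdef v v_neq0))
                                  (mulr_gt0 c2_gt0 (B_posdef v v_neq0)).
by rewrite mulmxDr mulmxDl -!scalemxAr -!scalemxAl !mxE.
Qed.

Lemma hpd_cong P A : P \in unitmx -> hpd A -> hpd (P *m A *m ctrmx P).
Proof.
move=> P_unit [A_herm A_posdef]; split.
  by rewrite /Defs.hermitian !ctrmx_mul ctrmxK A_herm mulmxA.
move=> v v_neq0; have Pv_neq0 : ctrmx P *m v != 0.
  apply: contraNneq v_neq0 => Pv0.
  by rewrite -[v](mulKmx (_ : ctrmx P \in unitmx)) ?unitmx_ctrmx // Pv0 mulmx0.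
by have := A_posdef _ Pv_neq0; rewrite ctrmx_mul ctrmxK !mulmxA.
Qed.

Lemma hpd_factor A : hpd A -> exists2 T, T \in unitmx & A = T *m ctrmx T.
Proof.
move=> /hpd_spectral [U [d [U_unitary d_gt0 ->]]].
pose s := \row_j sqrtC (d 0 j).
have s_gt0 j : 0 < s 0 j by rewrite mxE sqrtC_gt0.
exists (ctrmx U *m diag_mx s).
  by rewrite unitmx_mul diag_mx_pos_unit ?unitarymx_unit ?ctrmx_unitary.
rewrite ctrmx_mul ctrmxK ctrmx_diag -!mulmxA (mulmxA (diag_mx s)) mulmx_diag.
congr (_ *m (diag_mx _ *m _)); apply/rowP => j; rewrite !mxE.
by rewrite conj_Creal ?gtr0_real ?sqrtC_gt0 // -expr2 sqrtCK.
Qed.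

End PositiveDefinite.

Section TraceInversePower.
Variables (C : numClosedFieldType) (m : nat).
Implicit Types (A B M T U V X Y : 'M[C]_m) (a b d : 'rV[C]_m).

Definition tr_invpow n A := \tr (invmx A ^+ n).

Definition tr_invpow_bregman n A B :=
  tr_invpow n A - tr_invpow n B + n%:R * \tr (invmx B ^+ n.+1 *m (A - B)).

Lemma invmx_expr_spectral U d k : U \is unitarymx -> (forall i, 0 < d 0 i) ->
  invmx (ctrmx U *m diag_mx d *m U) ^+ k = ctrmx U *m diag_mx (\row_j (d 0 j)^-1 ^+ k) *m U.
Proof.
move=> U_unitary d_gt0; have UUt := unitarymx_mulmxV U_unitary.
have d_unit i : d 0 i \is a GRing.unit by rewrite unitfE lt0r_neq0.
rewrite invmx_conj ?diag_mx_pos_unit // exprmx_conj // (mulmx1_invmx (diag_mx_inv d_unit)).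
by rewrite diag_mx_expr; congr (_ *m diag_mx _ *m _); apply/rowP => j; rewrite !mxE.
Qed.

Lemma tr_invpow_spectral n U d : U \is unitarymx -> (forall i, 0 < d 0 i) ->
  tr_invpow n (ctrmx U *m diag_mx d *m U) = \sum_i (d 0 i)^-1 ^+ n.
Proof.
move=> U_unitary d_gt0; rewrite /tr_invpow invmx_expr_spectral //.
rewrite mxtrace_conj ?unitarymx_mulmxV // mxtrace_diag.
by apply: eq_bigr => i _; rewrite mxE.
Qed.

Lemma mxtrace_spectral_mul U V a b :
  \tr ((ctrmx V *m diag_mx b *m V) *m (ctrmx U *m diag_mx a *m U)) =
  \sum_i \sum_j `|(U *m ctrmx V) i j| ^+ 2 * (b 0 j * a 0 i).
Proof.
set Q := U *m ctrmx V.
have -> : \tr ((ctrmx V *m diag_mx b *m V) *m (ctrmx U *m diag_mx a *m U)) =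
          \tr (diag_mx b *m ctrmx Q *m diag_mx a *m Q).
  by rewrite -!mulmxA mxtrace_mulC /Q ctrmx_mul ctrmxK !mulmxA.
clearbody Q; rewrite /mxtrace exchange_big /=; apply: eq_bigr => j _; rewrite mxE.
by apply: eq_bigr => i _; rewrite mul_mx_diag mul_diag_mx !mxE normCK; ring.
Qed.

Lemma tr_invpow_bregman_spectral n U V a b :
  U \is unitarymx -> V \is unitarymx -> (forall i, 0 < a 0 i) -> (forall j, 0 < b 0 j) ->
  tr_invpow_bregman n (ctrmx U *m diag_mx a *m U) (ctrmx V *m diag_mx b *m V) =
  \sum_i \sum_j `|(U *m ctrmx V) i j| ^+ 2 * invpow_bregman n (a 0 i) (b 0 j).
Proof.
move=> U_unitary V_unitary a_gt0 b_gt0.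
have Q_unitary : U *m ctrmx V \is unitarymx by rewrite mul_unitarymx ?ctrmx_unitary.
set A := ctrmx U *m _ *m U; set B := ctrmx V *m _ *m V; set Q := U *m ctrmx V in Q_unitary *.
have trA : tr_invpow n A = \sum_i \sum_j `|Q i j| ^+ 2 * (a 0 i)^-1 ^+ n.
  rewrite tr_invpow_spectral //; apply: eq_bigr => i _.
  by rewrite -mulr_suml unitarymx_norm_row // mul1r.
have trB : tr_invpow n B = \sum_i \sum_j `|Q i j| ^+ 2 * (b 0 j)^-1 ^+ n.
  rewrite tr_invpow_spectral // exchange_big /=; apply: eq_bigr => j _.
  by rewrite -mulr_suml unitarymx_norm_col // mul1r.
have trBA : \tr (invmx B ^+ n.+1 *m A) =
            \sum_i \sum_j `|Q i j| ^+ 2 * ((b 0 j)^-1 ^+ n.+1 * a 0 i).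
  rewrite invmx_expr_spectral // mxtrace_spectral_mul -/Q.
  by apply: eq_bigr => i _; apply: eq_bigr => j _; rewrite [X in _ * (X * _)]mxE.
have trBB : \tr (invmx B ^+ n.+1 *m B) = tr_invpow n B.
  by rewrite exprSr -mulmxE -mulmxA mulVmx ?mulmx1 ?spectral_unit.
rewrite /tr_invpow_bregman mulmxBr raddfB /= trBB trBA trA trB.
rewrite -!sumrB mulr_sumr -big_split /=; apply: eq_bigr => i _.
rewrite -!sumrB mulr_sumr -big_split /=; apply: eq_bigr => j _.
by rewrite /invpow_bregman; ring.
Qed.

Lemma tr_invpow_bregman_ge0 n A B : hpd A -> hpd B -> 0 <= tr_invpow_bregman n A B.
Proof.
move=> /hpd_spectral [U [a [U_unitary a_gt0 ->]]] /hpd_spectral [V [b [V_unitary b_gt0 ->]]].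
rewrite tr_invpow_bregman_spectral //; apply: sumr_ge0 => i _; apply: sumr_ge0 => j _.
by rewrite mulr_ge0 ?exprn_ge0 ?invpow_bregman_ge0.
Qed.

Lemma tr_invpow_bregman_eq0 n A B : (0 < n)%N -> hpd A -> hpd B ->
  tr_invpow_bregman n A B = 0 -> A = B.
Proof.
move=> n_gt0 /hpd_spectral [U [a [U_unitary a_gt0 ->]]].
move=> /hpd_spectral [V [b [V_unitary b_gt0 ->]]].
rewrite tr_invpow_bregman_spectral //; set Q := U *m ctrmx V => sum_eq0.
have term_ge0 i j : 0 <= `|Q i j| ^+ 2 * invpow_bregman n (a 0 i) (b 0 j).
  by rewrite mulr_ge0 ?exprn_ge0 ?invpow_bregman_ge0.
have term_eq0 i j : `|Q i j| ^+ 2 * invpow_bregman n (a 0 i) (b 0 j) = 0.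
  have row_eq0 := psumr_eq0P (fun i _ => sumr_ge0 _ (fun j _ => term_ge0 i j)) sum_eq0.
  exact: (psumr_eq0P (fun j _ => term_ge0 i j) (row_eq0 i isT)).
have aQ_Qb : diag_mx a *m Q = Q *m diag_mx b.
  apply/matrixP => i j; rewrite mul_diag_mx mul_mx_diag [LHS]mxE [RHS]mxE.
  have [->|Qij_neq0] := eqVneq (Q i j) 0; first by rewrite mulr0 mul0r.
  move/eqP: (term_eq0 i j); rewrite mulf_eq0 expf_eq0 normr_eq0 (negPf Qij_neq0) /=.
  by move=> /eqP /(invpow_bregman_eq0 n_gt0 (a_gt0 i) (b_gt0 j)) ->; rewrite mulrC.
rewrite -[LHS]mulmx1 -(unitarymx_mulVmx V_unitary).
have -> : ctrmx U *m diag_mx a *m U *m (ctrmx V *m V) = ctrmx U *m (diag_mx a *m Q) *m V.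
  by rewrite /Q !mulmxA.
by rewrite aQ_Qb /Q !mulmxA unitarymx_mulVmx // mul1mx.
Qed.

Lemma tr_invpow_convex_gap n A1 A2 (c1 c2 : C) : c1 + c2 = 1 ->
  c1 * tr_invpow_bregman n A1 (c1 *: A1 + c2 *: A2) +
  c2 * tr_invpow_bregman n A2 (c1 *: A1 + c2 *: A2) =
  c1 * tr_invpow n A1 + c2 * tr_invpow n A2 - tr_invpow n (c1 *: A1 + c2 *: A2).
Proof.
move=> c12; set M := c1 *: A1 + c2 *: A2; set Z := invmx M ^+ n.+1.
have lin0 : c1 * \tr (Z *m (A1 - M)) + c2 * \tr (Z *m (A2 - M)) = 0.
  rewrite -!mxtraceZ !scalemxAr -mxtraceD -mulmxDr !scalerBr addrACA -opprD.
  by rewrite -scalerDl c12 scale1r subrr mulmx0 mxtrace0.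
rewrite /tr_invpow_bregman -/Z; move: lin0.
set g1 := tr_invpow n A1; set g2 := tr_invpow n A2; set gM := tr_invpow n M.
set t1 := \tr (Z *m (A1 - M)); set t2 := \tr (Z *m (A2 - M)) => lin0.
transitivity (c1 * g1 + c2 * g2 - (c1 + c2) * gM + n%:R * (c1 * t1 + c2 * t2)); first by ring.
by rewrite lin0 c12 mulr0 addr0 mul1r.
Qed.

Lemma tr_invpow_strict_convex n A1 A2 (c1 c2 : C) :
  (0 < n)%N -> hpd A1 -> hpd A2 -> A1 != A2 -> 0 < c1 -> 0 < c2 -> c1 + c2 = 1 ->
  tr_invpow n (c1 *: A1 + c2 *: A2) < c1 * tr_invpow n A1 + c2 * tr_invpow n A2.
Proof.
move=> n_gt0 hA1 hA2 A12 c1_gt0 c2_gt0 c12.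
rewrite -subr_gt0 -(tr_invpow_convex_gap n A1 A2 c12).
have hM := hpd_pos_comb c1_gt0 c2_gt0 hA1 hA2; set M := c1 *: A1 + c2 *: A2 in hM *.
have bregman_gt0 A : hpd A -> A != M -> 0 < tr_invpow_bregman n A M.
  move=> hA AM; rewrite lt_def tr_invpow_bregman_ge0 // andbT.
  by apply: contra AM => /eqP /(tr_invpow_bregman_eq0 n_gt0 hA hM) ->.
have [A1M|A1M] := eqVneq A1 M.
  apply: ltr_wpDl; first by rewrite mulr_ge0 ?tr_invpow_bregman_ge0 // ltW.
  rewrite mulr_gt0 ?bregman_gt0 //; apply: contraNneq A12 => A2M.
  by rewrite A1M A2M.
apply: ltr_wpDr; first by rewrite mulr_ge0 ?tr_invpow_bregman_ge0 // ltW.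
by rewrite mulr_gt0 ?bregman_gt0.
Qed.

Lemma fXn_tr_invpow n T Y : T \in unitmx -> Y \in unitmx ->
  fXn (T *m ctrmx T) n Y = tr_invpow n (invmx T *m Y *m ctrmx (invmx T)).
Proof.
move=> T_unit Y_unit; rewrite /fXn /tr_invpow.
have -> : invmx (invmx T *m Y *m ctrmx (invmx T)) = ctrmx T *m (invmx Y *m T).
  rewrite !invmx_mul ?unitmx_mul ?unitmx_ctrmx ?unitmx_inv ?T_unit //.
  by rewrite ctrmx_inv !invmxK.
by rewrite [LHS]mxtrace_exprC [RHS]mxtrace_exprC mulmxA.
Qed.

Lemma fXn_strict_convex n X (Y1 Y2 : 'M[C]_m) (c1 c2 : C) :
  hpd X -> (0 < n)%N -> hpd Y1 -> hpd Y2 -> Y1 != Y2 ->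
  0 < c1 -> 0 < c2 -> c1 + c2 = 1 ->
  fXn X n (c1 *: Y1 + c2 *: Y2) < c1 * fXn X n Y1 + c2 * fXn X n Y2.
Proof.
move=> /hpd_factor [T T_unit ->] n_gt0 hY1 hY2 Y12 c1_gt0 c2_gt0 c12.
have invT_unit : invmx T \in unitmx by rewrite unitmx_inv.
have hY := hpd_pos_comb c1_gt0 c2_gt0 hY1 hY2.
rewrite !fXn_tr_invpow ?(hpd_unit hY) ?(hpd_unit hY1) ?(hpd_unit hY2) //.
rewrite mulmxDr mulmxDl -!scalemxAr -!scalemxAl.
apply: tr_invpow_strict_convex => //; try exact: hpd_cong.
apply: contra_neq Y12 => /(congr1 (fun Z => invmx (invmx T) *m Z *m invmx (ctrmx (invmx T)))).
by rewrite !mulmxA !mulVmx // !mul1mx !mulmxK ?unitmx_ctrmx.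
Qed.

End TraceInversePower.

Theorem lemma5p2 (R : realType) (m n : nat) (X : 'M[R[i]]_m) :
  hpd X -> (1 <= n)%N ->
  forall (Y1 Y2 : 'M[R[i]]_m) (t : R),
    hpd Y1 -> hpd Y2 -> Y1 != Y2 -> 0 < t < 1 ->
    fXn X n (t%:C%C *: Y1 + (1 - t)%:C%C *: Y2)
      < t%:C%C * fXn X n Y1 + (1 - t)%:C%C * fXn X n Y2.
Proof.
move=> hX n_gt0 Y1 Y2 t hY1 hY2 Y12 /andP[t_gt0 t_lt1].
apply: fXn_strict_convex => //.
- by rewrite -(rmorph0 (real_complex R)) ltcR.
- by rewrite -(rmorph0 (real_complex R)) ltcR subr_gt0.
- by rewrite -rmorphD addrC subrK rmorph1.
Qed.
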